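(* Let $\psi$ be an $n$-dimensional unique sink orientation and $v \in Q^n$ a vertex whose set of out-neighbors $\mathcal{N}^+(v)$ is already known. Then there is an algorithm that joins the vertices in $\mathcal{N}^+(v)$, i.e. outputs a vertex $w$ such that $u \rightsquigarrow w$ for every $u \in \mathcal{N}^+(v)$, using $|s_\psi(v)|$ many vertex evaluations.
   Context: Let $Q^n = 2^{[n]}$ be the vertex set of the $n$-cube, with $u,v$ adjacent iff $|u\oplus v|=1$; faces are $F_{J,v}=\{u : v\oplus u\subseteq J\}$ for $J\subseteq[n]$. A unique sink orientation (USO) is an orientation of the cube's edges such that every nonempty face has a unique sink (vertex with no outgoing edges within the face). The outmap $s_\psi(v)$ is the set of coordinates $j$ such that the edge $\{v,v\oplus\{j\}\}$ is directed away from $v$. $\mathcal{N}^+(v) = \{v\oplus\{j\} : j\in s_\psi(v)\}$ is the set of out-neighbors of $v$. $u \rightsquigarrow w$ means there is a directed path (possibly of length $0$) from $u$ to $w$. Computation is in the vertex oracle model: a vertex evaluation is a query that, given $v$, returns $s_\psi(v)$. *)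

From mathcomp Require Import all_boot.
Set Implicit Arguments. Unset Strict Implicit. Unset Printing Implicit Defensive.

(* Vertices of the n-cube Q^n = 2^[n] are subsets of 'I_n. *)
Notation vertex n := {set 'I_n}.

Definition symd (n : nat) (u w : vertex n) : vertex n := (u :\: w) :|: (w :\: u).

(* An orientation is given by its outmap s : Q^n -> 2^[n]: j \in s v iff the
   edge {v, v (+) {j}} is directed away from v. *)
Definition is_orientation (n : nat) (s : vertex n -> vertex n) : Prop :=
  forall (v : vertex n) (j : 'I_n),
    (j \in s v) = (j \notin s (symd v [set j])).

Definition face (n : nat) (J v : vertex n) : {set vertex n} :=
  [set u | symd v u \subset J].

Definition is_sink_in (n : nat) (s : vertex n -> vertex n) (J v u : vertex n) : bool :=
  (u \in face J v) && (s u :&: J == set0).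

Definition is_USO (n : nat) (s : vertex n -> vertex n) : Prop :=
  is_orientation s /\
  forall J v : vertex n, exists! u : vertex n, is_sink_in s J v u.

Definition out_edge (n : nat) (s : vertex n -> vertex n) : rel (vertex n) :=
  fun a b => [exists j, (j \in s a) && (b == symd a [set j])].

Definition reaches (n : nat) (s : vertex n -> vertex n) (u w : vertex n) : bool :=
  connect (out_edge s) u w.

Definition out_nbrs (n : nat) (s : vertex n -> vertex n) (v : vertex n) : {set vertex n} :=
  [set symd v [set j] | j in s v].

(* Vertex oracle model: an (adaptive, deterministic) algorithm is a decision
   tree which either outputs a vertex or evaluates the outmap at a vertex and
   continues depending on the answer. *)
Inductive oracle_alg (n : nat) : Type :=
| Output of vertex n
| Query of vertex n & (vertex n -> oracle_alg n).

Fixpoint alg_output (n : nat) (A : oracle_alg n) (s : vertex n -> vertex n) : vertex n :=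
  match A with
  | Output w => w
  | Query q k => alg_output (k (s q)) s
  end.

Fixpoint alg_queries (n : nat) (A : oracle_alg n) (s : vertex n -> vertex n) : nat :=
  match A with
  | Output _ => 0
  | Query q k => (alg_queries (k (s q)) s).+1
  end.

From mathcomp Require Import all_boot.
Set Implicit Arguments. Unset Strict Implicit. Unset Printing Implicit Defensive.

(* Write x_a := v (+) {a} for the out-neighbours of v.  If q is the sink of
   the face spanned by u and q, then u reaches q: follow any outgoing edge of
   that face.  Flipping a fixed set of coordinates of the outmap preserves
   unique sinks, so reversing every edge does too; hence if q is the source of
   the face spanned by u and q, then q reaches u.
   The algorithm queries the x_j, j in s(v), one by one, and keeps a set A of
   queried directions such that b is in s(x_a) for all distinct a, b in A, and
   every out-neighbour queried so far reaches some x_a with a in A.  When x_j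
   is queried: if j is outgoing at every x_a, then j enters A and every a with
   a not in s(x_j) leaves it, because x_j is the sink of the square spanned by
   x_a and x_j; otherwise x_j reaches such an x_a and A is unchanged.  At the
   end each x_a is the source of the face spanned by x_a and v (+) A, so the
   output v (+) A is reached from every out-neighbour. *)

Section SymmetricDifference.
Variable n : nat.
Implicit Types u v w A B S J : vertex n.

Lemma in_symd u w i : (i \in symd u w) = (i \in u) (+) (i \in w).
Proof. by rewrite !inE; case: (i \in u); case: (i \in w). Qed.

Lemma symdC u w : symd u w = symd w u.
Proof. by apply/setP=> i; rewrite !in_symd addbC. Qed.

Lemma symdxx u : symd u u = set0.
Proof. by apply/setP=> i; rewrite in_symd addbb inE. Qed.

Lemma symdK u w : symd u (symd u w) = w.
Proof. by apply/setP=> i; rewrite !in_symd addKb. Qed.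

Lemma symdAC u A B : symd (symd u A) B = symd (symd u B) A.
Proof. by apply/setP=> i; rewrite !in_symd addbAC. Qed.

Lemma symdKr u w : symd (symd u w) w = u.
Proof. by apply/setP=> i; rewrite !in_symd addbK. Qed.

Lemma symdKl v A B : symd (symd v A) (symd v B) = symd A B.
Proof. by apply/setP=> i; rewrite !in_symd addbACA addbb. Qed.

Lemma symdT u : symd u setT = ~: u.
Proof. by apply/setP=> i; rewrite in_symd !inE addbT. Qed.

Lemma symd_set1 A a : a \in A -> symd A [set a] = A :\ a.
Proof.
move=> aA; apply/setP=> i; rewrite in_symd !inE.
by have [->|] := eqVneq i a; rewrite ?aA ?addbF // andbC.
Qed.

Lemma symd_subset J u v w :
  symd u v \subset J -> symd v w \subset J -> symd u w \subset J.
Proof.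
move=> /subsetP uv /subsetP vw; apply/subsetP => i; move: (uv i) (vw i).
by rewrite !in_symd; case: (i \in u); case: (i \in v); case: (i \in w) => //= _ _; apply.
Qed.

Lemma setI_symd1_notin S J j : j \notin J -> symd S [set j] :&: J = S :&: J.
Proof.
move=> jNJ; apply/setP=> i; rewrite !in_setI in_symd in_set1.
by have [->|] := eqVneq i j; rewrite ?(negbTE jNJ) ?andbF ?addbF.
Qed.

Lemma setI_symd1_eq0 S J j : j \in J ->
  (symd S [set j] :&: J == set0) = (S :&: (J :\ j) == set0) && (j \in S).
Proof.
move=> jJ; apply/eqP/andP => [/setP E | [/eqP/setP E jS]].
  have Ei i : ((i \in S) (+) (i == j)) && (i \in J) = false.
    by have := E i; rewrite in_setI in_symd in_set1 inE.
  split; last by have := Ei j; rewrite eqxx jJ addbT andbT => /negbFE.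
  apply/eqP/setP => i; rewrite !inE; have := Ei i.
  by have [->|_] := eqVneq i j; rewrite /= ?andbF // addbF => ->.
apply/setP => i; have := E i; rewrite !in_setI in_symd !inE.
by have [->|_] := eqVneq i j; rewrite /= ?jS ?addbF.
Qed.

Lemma setI_setD1_eq0 S J j :
  j \notin S -> (S :&: (J :\ j) == set0) = (S :&: J == set0).
Proof.
move=> jS; apply/eqP/eqP => /setP E; apply/setP => i; have := E i; rewrite !inE.
  by have [->|] := eqVneq i j; rewrite ?(negbTE jS).
by have [->|] := eqVneq i j; rewrite ?(negbTE jS).
Qed.

End SymmetricDifference.

Section Faces.
Variable n : nat.
Implicit Types u v w J K : vertex n.

Lemma in_face J v u : (u \in face J v) = (symd v u \subset J).
Proof. by rewrite inE. Qed.

Lemma face_refl J v : v \in face J v.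
Proof. by rewrite in_face symdxx sub0set. Qed.

Lemma face_trans J v u : u \in face J v -> face J u = face J v.
Proof.
rewrite in_face => vu; apply/setP => w; rewrite !in_face.
apply/idP/idP; first exact: symd_subset.
by apply: symd_subset; rewrite symdC.
Qed.

Lemma face_nbr J v j : (symd v [set j] \in face J v) = (j \in J).
Proof. by rewrite in_face symdK sub1set. Qed.

Lemma faceS J K v : J \subset K -> {subset face J v <= face K v}.
Proof. by move=> JK u; rewrite !in_face => /subset_trans; apply. Qed.

Lemma face_setD1 J v u j :
  u \in face J v -> j \notin symd v u -> u \in face (J :\ j) v.
Proof. by rewrite !in_face subsetD1 => -> ->. Qed.

End Faces.

Definition unique_sinks (n : nat) (s : vertex n -> vertex n) : Prop :=
  forall J v : vertex n, exists! u, is_sink_in s J v u.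

Section UniqueSinks.
Variable n : nat.
Implicit Types (s : vertex n -> vertex n) (u v w x z J X : vertex n).

Lemma sink_unique s J v x y : unique_sinks s ->
  is_sink_in s J v x -> is_sink_in s J v y -> x = y.
Proof. by move=> us xs ys; have [z [_ zu]] := us J v; rewrite -(zu _ xs) (zu _ ys). Qed.

Lemma eq_unique_sink s s' J v J' v' :
  is_sink_in s' J v =1 is_sink_in s J' v' ->
  (exists! u, is_sink_in s J' v' u) -> exists! u, is_sink_in s' J v u.
Proof. by move=> E [z [zs zu]]; exists z; split => [|y]; rewrite E //; apply: zu. Qed.

Lemma eq_unique_sinks s s' : s =1 s' -> unique_sinks s -> unique_sinks s'.
Proof. by move=> e us J v; apply: eq_unique_sink (us J v) => u; rewrite /is_sink_in e. Qed.

(* In a face F_{J,w} with j in J, flipping j makes j outgoing at the old sink z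
   of F_{J,w}; the new sinks are the old sinks of the half of F_{J,w} that does
   not contain z. *)
Lemma unique_sinks_flip1 s j :
  unique_sinks s -> unique_sinks (fun x => symd (s x) [set j]).
Proof.
move=> us J w; have [jJ | jNJ] := boolP (j \in J); last first.
  by apply: eq_unique_sink (us J w) => x; rewrite /is_sink_in setI_symd1_notin.
have [z [zsink _]] := us J w; have /andP[zF] := zsink; rewrite setI_eq0 => zS.
have zj : j \in s z = false by apply: disjointFl zS jJ.
have z_halfsink : is_sink_in s (J :\ j) z z.
  by rewrite /is_sink_in face_refl setI_eq0 (disjointWr (subD1set J j) zS).
have faceJ : face J (symd z [set j]) = face J w.
  by rewrite (face_trans (_ : _ \in face J z)) ?face_nbr // (face_trans zF).
apply: eq_unique_sink (us (J :\ j) (symd z [set j])) => x.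
rewrite /is_sink_in setI_symd1_eq0 //.
apply/idP/idP => [/and3P[xF xS xj] | /andP[xF xS]].
- rewrite xS andbT; apply: face_setD1; first by rewrite faceJ.
  have jzx : j \in symd z x.
    apply: contraTT xj => jzx; suff -> : x = z by rewrite zj.
    apply: sink_unique us _ z_halfsink.
    by rewrite /is_sink_in face_setD1 ?(face_trans zF).
  by move: jzx; rewrite !in_symd inE eqxx addbT addNb negbK.
- have xFw : x \in face J w by rewrite -faceJ (faceS (subD1set J j) xF).
  rewrite xFw xS /=; apply/negPn/negP => xj.
  have xz : x = z.
    apply: sink_unique us _ zsink.
    by rewrite /is_sink_in xFw -(setI_setD1_eq0 _ xj).
  by move: xF; rewrite xz in_face symdC symdK sub1set !inE eqxx.
Qed.

Lemma unique_sinks_flip s X : unique_sinks s -> unique_sinks (fun x => symd (s x) X).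
Proof.
move=> us; have [m] := ubnP #|X|; elim: m X => // m IH X; rewrite ltnS => leXm.
have [-> | [j jX]] := set_0Vmem X.
  by apply: eq_unique_sinks us => x; apply/setP => i; rewrite in_symd inE addbF.
have /IH/(unique_sinks_flip1 j) : #|X :\ j| < m by rewrite (cardsD1 j X) jX in leXm.
apply: eq_unique_sinks => x; apply/setP => i; rewrite !in_symd !inE.
by have [->|] := eqVneq i j; rewrite ?jX ?addbF.
Qed.

Lemma unique_sinks_compl s : unique_sinks s -> unique_sinks (fun x => ~: s x).
Proof. by move/(unique_sinks_flip setT); apply: eq_unique_sinks => x; rewrite symdT. Qed.

End UniqueSinks.

Section Reachability.
Variable n : nat.
Implicit Types (s : vertex n -> vertex n) (u v w q : vertex n).

Lemma reaches_out_nbr s u j : j \in s u -> reaches s u (symd u [set j]).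
Proof. by move=> ju; apply: connect1; apply/existsP; exists j; rewrite ju eqxx. Qed.

Lemma out_edge_compl s : is_orientation s ->
  out_edge (fun x => ~: s x) =2 [rel a b | out_edge s b a].
Proof.
move=> Ho a b; apply/existsP/existsP => -[j /andP[ja /eqP->]]; exists j.
  by rewrite -[_ \in s _]negbK -Ho -in_setC ja symdKr /=.
by rewrite in_setC -Ho ja symdKr eqxx.
Qed.

Lemma reaches_compl s u w : is_orientation s ->
  reaches (fun x => ~: s x) u w = reaches s w u.
Proof. by move=> Ho; rewrite /reaches (eq_connect (out_edge_compl Ho)) connect_rev. Qed.

Lemma reaches_sink s u q : unique_sinks s ->
  s q :&: symd u q == set0 -> reaches s u q.
Proof.
move=> us; have [m] := ubnP #|symd u q|; elim: m u => // m IH u.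
rewrite ltnS => le_uq_m q_sink.
have [u_sink | [k]] := set_0Vmem (s u :&: symd u q).
  suff -> : u = q by apply: connect0.
  apply: (@sink_unique _ s (symd u q) q); first exact: us.
    by rewrite /is_sink_in in_face symdC subxx u_sink eqxx.
  by rewrite /is_sink_in face_refl q_sink.
rewrite inE => /andP[ku kuq].
have step_uq : symd (symd u [set k]) q = symd u q :\ k by rewrite symdAC symd_set1.
apply: connect_trans (reaches_out_nbr ku) (IH _ _ _); rewrite step_uq.
- by rewrite (cardsD1 k) kuq in le_uq_m.
- by rewrite setI_eq0 (disjointWr (subD1set _ k)) // -setI_eq0.
Qed.

Lemma source_reaches s u q : is_orientation s -> unique_sinks s ->
  symd u q \subset s q -> reaches s q u.
Proof.
move=> Ho us uq; rewrite -(reaches_compl _ _ Ho).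
by apply: reaches_sink (unique_sinks_compl us) _; rewrite setIC -setDE setD_eq0.
Qed.

End Reachability.

Section JoinAlgorithm.
Variable n : nat.
Implicit Types (v O : vertex n) (A D : {set 'I_n}) (f : 'I_n -> vertex n).

Definition join_step A f j O : {set 'I_n} :=
  if [forall a in A, j \in f a] then j |: (A :&: O) else A.

Definition store f j O : 'I_n -> vertex n := fun i => if i == j then O else f i.

Fixpoint join_alg v (l : seq 'I_n) A f : oracle_alg n :=
  if l is j :: l' then
    Query (symd v [set j]) (fun O => join_alg v l' (join_step A f j O) (store f j O))
  else Output (symd v A).

Lemma join_alg_queries v l A f s : alg_queries (join_alg v l A f) s = size l.
Proof. by elim: l A f => //= j l IH A f; rewrite IH. Qed.

Variables (s : vertex n -> vertex n) (v : vertex n).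
Hypotheses (Ho : is_orientation s) (us : unique_sinks s).

Local Notation x i := (symd v [set i]).

Definition join_inv D A f : Prop :=
  [/\ {in A, forall a, f a = s (x a)}, A \subset s v,
      {in A &, forall a b, a != b -> b \in s (x a)} &
      {in D, forall i, exists2 a, a \in A & reaches s (x i) (x a)}].

Lemma out_nbr_reaches a b : a \in s v -> b \in s v -> a \notin s (x b) ->
  reaches s (x a) (x b).
Proof.
move=> av bv ab; apply: reaches_sink => //; rewrite symdKl.
have bxb : b \in s (x b) = false by apply/negbTE; rewrite -Ho.
apply/eqP/setP => i; rewrite in_setI in_symd !in_set1 inE.
have [->|_] := eqVneq i a; first by rewrite (negbTE ab).
by have [->|_] := eqVneq i b; rewrite ?bxb ?andbF.
Qed.

Lemma join_step_inv D A f j : j \in s v -> join_inv D A f ->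
  join_inv (j |: D) (join_step A f j (s (x j))) (store f j (s (x j))).
Proof.
move=> jv [stored Av pair cover]; rewrite /join_step.
case: ifP => [/forall_inP all_j | /negbT/forall_inPn[a aA ja]].
  split.
  - move=> a; rewrite /store !inE; have [->//|_] := eqVneq a j.
    by case/andP => /stored.
  - by rewrite subUset sub1set jv (subset_trans (subsetIl _ _)).
  - move=> a b; rewrite !inE.
    case/orP=> [/eqP->|/andP[aA ax]]; case/orP=> [/eqP->|/andP[bA bx]] //.
    + by rewrite eqxx.
    + by move=> _; rewrite -stored // all_j.
    + exact: pair.
  - move=> i /setU1P[->|/cover[a aA ia]].
      by exists j; [exact: setU11 | exact: connect0].
    case ax: (a \in s (x j)); first by exists a; rewrite // !inE aA ax orbT.
    exists j; first exact: setU11.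
    by apply: connect_trans ia (out_nbr_reaches _ jv _); rewrite ?ax ?(subsetP Av).
split => //.
- by move=> b bA; rewrite /store; case: eqP => [->|_]; last exact: stored.
- move=> i /setU1P[->|/cover //].
  by exists a => //; apply: out_nbr_reaches jv (subsetP Av _ aA) _; rewrite -stored.
Qed.

Lemma join_alg_spec l D A f : {subset l <= s v} -> join_inv D A f ->
  exists2 A', alg_output (join_alg v l A f) s = symd v A' &
    exists f', join_inv (D :|: [set:: l]) A' f'.
Proof.
elim: l D A f => [|j l IH] D A f lv inv /=.
  by exists A => //; exists f; rewrite set_nil setU0.
have jv : j \in s v by apply: lv; rewrite mem_head.
have lv' : {subset l <= s v} by move=> i il; apply: lv; rewrite inE il orbT.
have [A' -> [f' inv']] := IH _ _ _ lv' (join_step_inv jv inv).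
by exists A' => //; exists f'; rewrite set_cons setUCA setUA.
Qed.

Lemma join_inv_reaches D A f : join_inv D A f ->
  {in D, forall i, reaches s (x i) (symd v A)}.
Proof.
move=> [_ Av pair cover] i /cover[a aA ia]; apply: connect_trans ia _.
apply: source_reaches => //; rewrite symdKl symd_set1 //.
by apply/subsetP => b /setD1P[ba bA]; apply: pair; rewrite // eq_sym.
Qed.

End JoinAlgorithm.

Theorem lemma5 (n : nat) :
  exists A : vertex n -> vertex n -> oracle_alg n,
    forall (s : vertex n -> vertex n), is_USO s ->
    forall v : vertex n,
      (alg_queries (A v (s v)) s <= #|s v|)%N /\
      (forall u, u \in out_nbrs s v -> reaches s u (alg_output (A v (s v)) s)).
Proof.
exists (fun v sv : vertex n => join_alg v (enum sv) set0 (fun _ => set0)).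
move=> s [Ho us] v; split; first by rewrite join_alg_queries cardE.
have init : join_inv s v set0 set0 (fun _ => set0).
  by split => [a | | a b | i]; rewrite ?inE ?sub0set.
have [|A -> [f inv]] := join_alg_spec Ho us (l := enum (s v)) _ init.
  by move=> i; rewrite mem_enum.
move=> _ /imsetP[j jv ->]; apply: (join_inv_reaches Ho us inv).
by rewrite set0U set_enum.
Qed.
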